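(* Let $(A_C,\mathcal R_A)$ be an autocatalytic core of a CRN. Then $|A_C|=|\mathcal R_A|$ and its stoichiometric matrix $\overline{\mathbb S}=(\mathbb S)_{A_C}^{\mathcal R_A}$ is a square invertible matrix.
   Context: A chemical reaction network (CRN) consists of a finite species set $\mathcal S$ and a finite set $\mathcal R$ of reactions; each reaction $r$ is written $r^-\to r^+$ with input complex $r^-\in\mathbb Z_{\ge0}^{\mathcal S}$ and output complex $r^+\in\mathbb Z_{\ge0}^{\mathcal S}$. The input and output matrices $\mathbb S^-,\mathbb S^+$ are the $\mathcal S\times\mathcal R$ matrices whose column indexed by $r$ is $r^-$, resp. $r^+$; the stoichiometric matrix is $\mathbb S=\mathbb S^+-\mathbb S^-$. For a matrix $\mathbb A$ with rows indexed by $\mathcal S$ and columns by $\mathcal R$ and subsets $M\subseteq\mathcal S$, $N\subseteq\mathcal R$, $(\mathbb A)_M^N$ is the submatrix with rows in $M$ and columns in $N$. For a vector $\mathbf v$: $\mathbf v\gg\mathbf 0$ means all entries are $>0$; $\mathbf v>\mathbf 0$ (semi-positive) means all entries are $\ge0$ and $\mathbf v\ne\mathbf 0$. A motif is a pair $(\mathcal M,\mathcal R')$ with $\mathcal M\subseteq\mathcal S$, $\mathcal R'\subseteq\mathcal R$. It is exclusively autocatalytic if: (i) there is $\mathbf v\in\mathbb R^{\mathcal R'}$, $\mathbf v\gg\mathbf0$, with $(\mathbb S)_{\mathcal M}^{\mathcal R'}\mathbf v\gg\mathbf 0$; (ii) every row of $(\mathbb S^-)_{\mathcal M}^{\mathcal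 R'}$ is semi-positive; (iii) every column of $(\mathbb S^-)_{\mathcal M}^{\mathcal R'}$ is semi-positive. An autocatalytic core is an exclusively autocatalytic motif $(A_C,\mathcal R_A)$ such that no motif $(\mathcal M',\mathcal R'')\neq(A_C,\mathcal R_A)$ with $\mathcal M'\subseteq A_C$ and $\mathcal R''\subseteq\mathcal R_A$ is exclusively autocatalytic; $A_C$ is called its core set. *)

From mathcomp Require Import all_boot all_order all_algebra.
Set Implicit Arguments. Unset Strict Implicit. Unset Printing Implicit Defensive.
Import Order.TTheory GRing.Theory Num.Theory.
Local Open Scope ring_scope.

(* A CRN: finite species type S, finite reaction type Rx, input complexes
   Sm s r = (r^-)_s and output complexes Sp s r = (r^+)_s (nonneg integers). *)
Unset Implicit Arguments.
Record CRN := {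
  species : finType;
  reaction : finType;
  Sin : species -> reaction -> nat;
  Sout : species -> reaction -> nat
}.
Set Implicit Arguments.
Arguments Sin {c} s r.
Arguments Sout {c} s r.

Definition stoich (N : CRN) (s : species N) (r : reaction N) : int :=
  (Sout s r)%:Z - (Sin s r)%:Z.

Definition excl_autocatalytic (R : realFieldType) (N : CRN)
    (M : {set species N}) (R' : {set reaction N}) : Prop :=
  M != set0 /\
  (exists v : reaction N -> R,
      (forall r, r \in R' -> 0 < v r) /\
      (forall s, s \in M -> 0 < \sum_(r in R') (stoich s r)%:~R * v r)) /\
  (forall s, s \in M -> exists2 r, r \in R' & (0 < Sin s r)%N) /\
  (forall r, r \in R' -> exists2 s, s \in M & (0 < Sin s r)%N).

Definition autocatalytic_core (R : realFieldType) (N : CRN)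
    (A : {set species N}) (RA : {set reaction N}) : Prop :=
  excl_autocatalytic R A RA /\
  forall (M : {set species N}) (R' : {set reaction N}),
    M \subset A -> R' \subset RA -> (M, R') <> (A, RA) ->
    ~ excl_autocatalytic R M R'.

(* The submatrix (S)_A^{RA} as a #|A| x #|RA| matrix over R, rows and columns
   enumerated via enum_val (any fixed enumeration; invertibility is
   independent of the ordering). *)
Definition stoich_submx (R : realFieldType) (N : CRN)
    (A : {set species N}) (RA : {set reaction N}) : 'M[R]_(#|A|, #|RA|) :=
  \matrix_(i < #|A|, j < #|RA|) (stoich (enum_val i) (enum_val j))%:~R.

From mathcomp Require Import all_boot all_order all_algebra.
Import Order.TTheory GRing.Theory Num.Theory.
Local Open Scope ring_scope.
Set Implicit Arguments.
Unset Strict Implicit.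
Unset Printing Implicit Defensive.

(* Let (A, RA) be an autocatalytic core with flux vector v >> 0 witnessing
   condition (i).  Both halves of the argument exhibit a strictly smaller
   exclusively autocatalytic motif, contradicting minimality.
   - #|A| <= #|RA|: choosing one reactant in A for every reaction of RA gives
     a species set M that still covers every column of S^-, and (M, RA) is
     again exclusively autocatalytic; minimality forces M = A.
   - The restricted stoichiometric map w |-> (S)_A^RA w is injective: if
     S w = 0 and w takes a negative value, move from v along w until the first
     coordinate hits 0.  The new flux v' >= 0 has the same image S v' = S v >> 0,
     so its support, together with the species it consumes, is a smaller
     exclusively autocatalytic motif.  Hence w >= 0, and likewise -w >= 0.
   Injectivity says that the transpose of the submatrix is row-free, giving
   #|RA| <= #|A|; with equality the square matrix is then invertible. *)

Lemma ray_exit_orthant (R : realFieldType) (I : finType) (P : {set I})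
    (v w : I -> R) (i1 : I) :
  (forall i, i \in P -> 0 < v i) -> i1 \in P -> w i1 < 0 ->
  exists t : R, exists2 i0, i0 \in P & v i0 + t * w i0 = 0 /\
    forall i, i \in P -> 0 <= v i + t * w i.
Proof.
move=> vpos i1P wi1.
pose ratio i := v i / - w i.
pose neg i := (i \in P) && (w i < 0).
have negi1 : neg i1 by rewrite /neg i1P wi1.
case: (arg_minP ratio negi1) => i0 /andP[i0P wi0] ratio_min.
exists (ratio i0), i0 => //; split.
  by rewrite /ratio invrN mulrN mulNr mulfVK ?subrr // lt_eqF.
move=> i iP; case: (ltP (w i) 0) => [wi | wi].
  have := ratio_min i; rewrite /neg iP wi => /(_ isT).
  by rewrite ler_pdivlMr ?oppr_gt0 // mulrN -subr_ge0 opprK.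
have ratio_pos : 0 < ratio i0 by rewrite divr_gt0 ?vpos ?oppr_gt0.
exact: addr_ge0 (ltW (vpos i iP)) (mulr_ge0 (ltW ratio_pos) wi).
Qed.

Section Motifs.
Variables (R : realFieldType) (N : CRN).
Implicit Types (A M : {set species N}) (RA : {set reaction N}).

Lemma excl_autocatalytic_reactant_cover A RA M :
  excl_autocatalytic R A RA -> M \subset A ->
  (forall r, r \in RA -> exists2 s, s \in M & (0 < Sin s r)%N) ->
  excl_autocatalytic R M RA.
Proof.
move=> [An0 [[v [vpos growth]] [rows _]]] /subsetP MA cover.
split; last split; last split => //.
- have [s0 s0A] := set0Pn _ An0; have [r rRA _] := rows s0 s0A.
  by have [s sM _] := cover r rRA; apply/set0Pn; exists s.
- by exists v; split=> // s /MA; apply: growth.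
- by move=> s /MA; apply: rows.
Qed.

Lemma support_motif_autocatalytic A RA (v : reaction N -> R) :
  A != set0 ->
  (forall r, r \in RA -> exists2 s, s \in A & (0 < Sin s r)%N) ->
  (forall r, r \in RA -> 0 <= v r) ->
  (forall s, s \in A -> 0 < \sum_(r in RA) (stoich s r)%:~R * v r) ->
  excl_autocatalytic R
    [set s in A | [exists r in [set r in RA | 0 < v r], (0 < Sin s r)%N]]
    [set r in RA | 0 < v r].
Proof.
set Rsupp := [set r in RA | 0 < v r].
set Msupp := [set s in A | _].
move=> An0 cols vnneg growth.
have sum_supp s :
    \sum_(r in Rsupp) (stoich s r)%:~R * v r =
    \sum_(r in RA) (stoich s r)%:~R * v r.
  rewrite [RHS](bigID (mem Rsupp)) /= [X in _ = _ + X]big1 ?addr0.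
    by apply: eq_bigl => r; rewrite !inE; case: (r \in RA).
  move=> r /andP[rRA]; rewrite inE rRA /= => vr_npos.
  suff -> : v r = 0 by rewrite mulr0.
  by apply/eqP; rewrite eq_le vnneg // andbT leNgt.
have consumed r : r \in Rsupp -> exists2 s, s \in Msupp & (0 < Sin s r)%N.
  move=> rS; have /andP[rRA _] : (r \in RA) && (0 < v r) by move: rS; rewrite inE.
  have [s sA sr] := cols r rRA; exists s => //.
  by rewrite inE sA; apply/existsP; exists r; rewrite rS.
split; last split; last split => //.
- have [s0 s0A] := set0Pn _ An0.
  have : Rsupp != set0.
    apply: contraTneq (growth s0 s0A) => Rsupp0.
    by rewrite -sum_supp Rsupp0 big_set0 ltxx.
  by case/set0Pn=> r /consumed [s sM _]; apply/set0Pn; exists s.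
- exists v; split; first by move=> r; rewrite inE => /andP[].
  by move=> s; rewrite inE sum_supp => /andP[/growth].
- move=> s; rewrite inE => /andP[_ /existsP[r /andP[rS sr]]].
  by exists r.
Qed.

End Motifs.

Section Core.
Variables (R : realFieldType) (N : CRN).
Variables (A : {set species N}) (RA : {set reaction N}).
Hypothesis core : autocatalytic_core R A RA.

Lemma core_card_species_le : (#|A| <= #|RA|)%N.
Proof.
have [[An0 [_ [rows cols]]] minimal] := core.
have [s0 _] := set0Pn _ An0.
pose reactant r := odflt s0 [pick s in A | (0 < Sin s r)%N].
have reactantP r : r \in RA -> reactant r \in A /\ (0 < Sin (reactant r) r)%N.
  move=> rRA; rewrite /reactant; case: pickP => [s /andP[-> ->] // | none].
  by have [s sA sr] := cols r rRA; move: (none s); rewrite sA sr.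
pose M := reactant @: RA.
have MA : M \subset A.
  by apply/subsetP => _ /imsetP[r rRA ->]; case: (reactantP r rRA).
have M_autocatalytic : excl_autocatalytic R M RA.
  apply: excl_autocatalytic_reactant_cover core.1 MA _ => r rRA.
  by exists (reactant r); [apply: imset_f | case: (reactantP r rRA)].
rewrite leqNgt; apply/negP => ltRA.
apply: minimal MA (subxx _) _ M_autocatalytic => -[EM].
by move: (leq_imset_card reactant RA); rewrite -/M EM leqNgt ltRA.
Qed.

Lemma core_kernel_nonneg (w : reaction N -> R) :
  (forall s, s \in A -> \sum_(r in RA) (stoich s r)%:~R * w r = 0) ->
  forall r, r \in RA -> 0 <= w r.
Proof.
move=> kerw r1 r1RA; rewrite leNgt; apply/negP => wr1.
have [[An0 [[v [vpos growth]] [_ cols]]] minimal] := core.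
have [t [r0 r0RA [v'r0 v'nneg]]] := ray_exit_orthant vpos r1RA wr1.
pose v' r := v r + t * w r.
have same_growth s : s \in A ->
    \sum_(r in RA) (stoich s r)%:~R * v' r =
    \sum_(r in RA) (stoich s r)%:~R * v r.
  move=> sA; under eq_bigr do rewrite mulrDr mulrCA; rewrite big_split /=.
  by rewrite -mulr_sumr kerw // mulr0 addr0.
apply: (minimal _ _ _ _ _ (support_motif_autocatalytic An0 cols v'nneg _)).
- by apply/subsetP => s; rewrite inE => /andP[].
- by apply/subsetP => r; rewrite inE => /andP[].
- by case=> _ /setP/(_ r0); rewrite !inE r0RA /= v'r0 ltxx.
- by move=> s sA; rewrite same_growth // growth.
Qed.

Lemma core_kernel_trivial (w : reaction N -> R) :
  (forall s, s \in A -> \sum_(r in RA) (stoich s r)%:~R * w r = 0) ->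
  forall r, r \in RA -> w r = 0.
Proof.
move=> kerw r rRA; apply/eqP; rewrite eq_le core_kernel_nonneg // andbT.
rewrite -oppr_ge0; apply: (@core_kernel_nonneg (fun r => - w r)) => // s sA.
by under eq_bigr do rewrite mulrN; rewrite sumrN kerw // oppr0.
Qed.

Lemma core_stoich_tr_row_free : row_free (stoich_submx R A RA)^T.
Proof.
rewrite -kermx_eq0; apply/eqP/row_matrixP => k; rewrite row0.
set u := row k _.
have uS : u *m (stoich_submx R A RA)^T = 0 by rewrite -row_mul mulmx_ker row0.
pose w r := \sum_(j < #|RA| | enum_val j == r) u 0 j.
have wE j : w (enum_val j) = u 0 j.
  by rewrite /w (big_pred1 j) // => j'; rewrite /= (inj_eq enum_val_inj).
apply/rowP => j; rewrite [RHS]mxE -wE.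
apply: core_kernel_trivial (enum_valP j) => s sA.
move/rowP/(_ (enum_rank_in sA s)): uS; rewrite !mxE; apply: etrans.
rewrite big_enum_val /=; apply: eq_bigr => j' _.
by rewrite wE mulrC; congr (_ * _); rewrite !mxE enum_rankK_in.
Qed.

End Core.

Lemma castmx_square_unit (F : fieldType) (m n : nat) (e : m = n)
    (B : 'M[F]_(m, n)) :
  row_free B^T -> castmx (e, erefl n) B \in unitmx.
Proof. by case: n / e B => B; rewrite castmx_id -unitmx_tr -row_free_unit. Qed.

Theorem mainTheorem5 (R : realFieldType) (N : CRN)
    (A : {set species N}) (RA : {set reaction N}) :
  autocatalytic_core R A RA ->
  exists e : #|A| = #|RA|,
    castmx (e, erefl #|RA|) (stoich_submx R A RA) \in unitmx.
Proof.
move=> core.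
have free := core_stoich_tr_row_free core.
have le_RA_A : (#|RA| <= #|A|)%N.
  by move: free; rewrite -row_leq_rank => /leq_trans; apply; apply: rank_leq_col.
have e : #|A| = #|RA| by apply/eqP; rewrite eqn_leq (core_card_species_le core).
by exists e; apply: castmx_square_unit.
Qed.
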